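(* Let $a,b,d,f,c\in\mathbb{C}$ with $b\neq0$ and $d\neq0$. Then for every orbit $(z_1(n),z_2(n))$ of the system, $(z_1(n))$ is bounded if and only if $(z_2(n))$ is bounded.
   Context: The 2D coupled quadratic system with connectivity matrix $A=\begin{pmatrix}a&b\\ d&f\end{pmatrix}$ and parameter $c\in\mathbb{C}$ is the iteration $z_1(n+1)=(az_1(n)+bz_2(n))^2+c$, $z_2(n+1)=(dz_1(n)+fz_2(n))^2+c$, $n\ge 0$, from an initial condition $(z_1(0),z_2(0))\in\mathbb{C}^2$. *)

From Stdlib Require Import Reals.
From Coquelicot Require Import Coquelicot.
Open Scope R_scope.

Fixpoint orbit (a b d f c : C) (z0 : C * C) (n : nat) : C * C :=
  match n with
  | O => z0
  | S m =>
      let z := orbit a b d f c z0 m in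
      (Cplus (Cmult (Cplus (Cmult a (fst z)) (Cmult b (snd z)))
                    (Cplus (Cmult a (fst z)) (Cmult b (snd z)))) c,
       Cplus (Cmult (Cplus (Cmult d (fst z)) (Cmult f (snd z)))
                    (Cplus (Cmult d (fst z)) (Cmult f (snd z)))) c)
  end.

Definition bounded_seq (u : nat -> C) : Prop :=
  exists M : R, forall n : nat, Cmod (u n) <= M.

(* If z1 is bounded, then z1(n+1) - c = (a z1(n) + b z2(n))^2 bounds the linear
   form a z1(n) + b z2(n), and since b <> 0 one can solve it for z2(n).  The
   converse is the same argument with the roles of (a, b) and (f, d) swapped. *)
From Stdlib Require Import Reals.
From Coquelicot Require Import Coquelicot.
From Stdlib Require Import Lra Psatz.

Local Open Scope C_scope.

Lemma bounded_seq_ext (u v : nat -> C) :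
  (forall n, u n = v n) -> bounded_seq u -> bounded_seq v.
Proof.
  intros Huv [M HM]; exists M; intro n; rewrite <- Huv; apply HM.
Qed.

Lemma bounded_seq_plus (u v : nat -> C) :
  bounded_seq u -> bounded_seq v -> bounded_seq (fun n => u n + v n).
Proof.
  intros [M HM] [N HN]; exists (M + N)%R; intro n.
  eapply Rle_trans; [apply Cmod_triangle | apply Rplus_le_compat; auto].
Qed.

Lemma bounded_seq_scal (k : C) (u : nat -> C) :
  bounded_seq u -> bounded_seq (fun n => k * u n).
Proof.
  intros [M HM]; exists (Cmod k * M)%R; intro n.
  rewrite Cmod_mult; apply Rmult_le_compat_l; [apply Cmod_ge_0 | apply HM].
Qed.

Lemma Cmod_le_of_Cmod_sqr_le (w : C) (K : R) :
  Cmod (w * w) <= K -> Cmod w <= K + 1.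
Proof.
  rewrite Cmod_mult; intro Hw; pose proof (Cmod_ge_0 w); nra.
Qed.

Lemma bounded_seq_sqrt_shift (x w : nat -> C) (c : C) :
  (forall n, x (S n) = w n * w n + c) -> bounded_seq x -> bounded_seq w.
Proof.
  intros Hxw [M HM]; exists (M + Cmod c + 1)%R; intro n.
  apply Cmod_le_of_Cmod_sqr_le.
  replace (w n * w n) with (x (S n) + - c) by (rewrite Hxw; ring).
  eapply Rle_trans; [apply Cmod_triangle |].
  rewrite Cmod_opp; specialize (HM (S n)); lra.
Qed.

Lemma bounded_seq_solve_linear (p q : C) (x y : nat -> C) : q <> 0 ->
  bounded_seq x -> bounded_seq (fun n => p * x n + q * y n) -> bounded_seq y.
Proof.
  intros Hq Hx Hw.
  apply (bounded_seq_ext (fun n => / q * ((p * x n + q * y n) + - p * x n))).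
  - intro n; field; exact Hq.
  - apply bounded_seq_scal, bounded_seq_plus; [exact Hw |].
    apply bounded_seq_scal, Hx.
Qed.

Lemma bounded_seq_coupled_quadratic (p q c : C) (x y : nat -> C) : q <> 0 ->
  (forall n, x (S n) = (p * x n + q * y n) * (p * x n + q * y n) + c) ->
  bounded_seq x -> bounded_seq y.
Proof.
  intros Hq Hxy Hx.
  apply (bounded_seq_solve_linear p q x y Hq Hx).
  exact (bounded_seq_sqrt_shift x _ c Hxy Hx).
Qed.

Theorem mainTheorem6 (a b d f c : C) (z0 : C * C) :
  b <> 0%C -> d <> 0%C ->
  (bounded_seq (fun n => fst (orbit a b d f c z0 n)) <->
   bounded_seq (fun n => snd (orbit a b d f c z0 n))).
Proof.
  intros Hb Hd; split.
  - apply (bounded_seq_coupled_quadratic a b c); [exact Hb | reflexivity].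
  - apply (bounded_seq_coupled_quadratic f d c); [exact Hd |].
    intro n; simpl; rewrite (Cplus_comm (d * _)); reflexivity.
Qed.
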